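(* No duality of a thick building of type $\mathsf{F}_4$ is domestic.
   Context: A duality of an $\mathsf{F}_4$ building is an automorphism inducing the nontrivial automorphism of the $\mathsf{F}_4$ Coxeter graph. An automorphism is domestic if it maps no chamber to an opposite chamber (a chamber at maximal gallery distance). *)

(* Buildings of type F4 as W-metric buildings
   (Abramenko--Brown, Def. 5.1), with W the Weyl group of F4 realized
   concretely as the group of 4x4 rational matrices generated by the
   simple reflections of the F4 root system. *)
From HB Require Import structures.
From mathcomp Require Import all_boot all_order all_algebra.
Set Implicit Arguments. Unset Strict Implicit. Unset Printing Implicit Defensive.
Import Order.TTheory GRing.Theory Num.Theory.
Local Open Scope ring_scope.

(* Simple roots of F4, Dynkin diagram  1 - 2 => 3 - 4 :
   a1 = e2-e3, a2 = e3-e4 (long), a3 = e4, a4 = (e1-e2-e3-e4)/2 (short). *)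
Definition F4root_list (i : 'I_4) : seq rat :=
  match val i with
  | 0 => [:: 0; 1; -1; 0]
  | 1 => [:: 0; 0; 1; -1]
  | 2 => [:: 0; 0; 0; 1]
  | _ => [:: 1/2; -1/2; -1/2; -1/2]
  end.

Definition F4root (i : 'I_4) : 'cV[rat]_4 := \col_(j < 4) (F4root_list i)`_j.

Definition refl (a : 'cV[rat]_4) : 'M[rat]_4 :=
  1%:M - (2 / (a^T *m a) 0 0) *: (a *m a^T).

Definition sF4 (i : 'I_4) : 'M[rat]_4 := refl (F4root i).

Definition wprod (u : seq 'I_4) : 'M[rat]_4 :=
  foldr (fun i m => sF4 i *m m) 1%:M u.

Definition inW (w : 'M[rat]_4) : Prop := exists u, wprod u = w.

Definition wlen (w : 'M[rat]_4) (n : nat) : Prop :=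
  (exists u, size u = n /\ wprod u = w) /\
  (forall u, wprod u = w -> (n <= size u)%N).

Definition is_F4_building (Ch : Type) (delta : Ch -> Ch -> 'M[rat]_4) : Prop :=
  [/\ (forall C D, inW (delta C D)),
      (forall C D, delta C D = 1%:M <-> C = D),
      (forall C D C' i, delta C' C = sF4 i ->
          (delta C' D = sF4 i *m delta C D \/ delta C' D = delta C D) /\
          ((forall n, wlen (delta C D) n -> wlen (sF4 i *m delta C D) n.+1) ->
             delta C' D = sF4 i *m delta C D)) &
      (forall C D i, exists C', delta C' C = sF4 i /\
                                delta C' D = sF4 i *m delta C D)].

(* thick: every panel contains at least three chambers *)
Definition thick (Ch : Type) (delta : Ch -> Ch -> 'M[rat]_4) : Prop :=
  forall C i, exists C1 C2, C1 <> C2 /\ delta C C1 = sF4 i /\ delta C C2 = sF4 i.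

(* the nontrivial automorphism of the F4 Coxeter graph: 1<->4, 2<->3 *)
Definition tauF4 (i : 'I_4) : 'I_4 := rev_ord i.

Definition is_duality (Ch : Type) (delta : Ch -> Ch -> 'M[rat]_4) (sigma : Ch -> Ch) : Prop :=
  bijective sigma /\
  forall C D u, delta C D = wprod u ->
    delta (sigma C) (sigma D) = wprod (map tauF4 u).

Definition opposite (Ch : Type) (delta : Ch -> Ch -> 'M[rat]_4) (C D : Ch) : Prop :=
  exists m, wlen (delta C D) m /\
    forall u n, wlen (wprod u) n -> (n <= m)%N.

Definition domestic (Ch : Type) (delta : Ch -> Ch -> 'M[rat]_4) (sigma : Ch -> Ch) : Prop :=
  forall C, ~ opposite delta C (sigma C).

(* Lengths in W(F4) are counted by inversions: l(w) is the number of positive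
   roots made negative by w^-1, so l(s_i w) = l(w) +- 1 according to the sign of
   w^-1 a_i.  The graph automorphism tau exchanges long and short simple roots,
   and W preserves root lengths, so w^-1 a_i is never a_(tau i); hence when both
   s_i w and w s_(tau i) are longer than w, s_i w s_(tau i) is longer by two.
   Now let sigma be a duality and C a chamber with w = delta(C, sigma C) not of
   maximal length, and pick i with l(s_i w) > l(w).  Every chamber X <> C of
   the i-panel of C has delta(X, sigma C) = s_i w.  If l(w s_(tau i)) > l(w),
   then delta(X, sigma X) = s_i w s_(tau i).  Otherwise let E be the projection
   of C on the (tau i)-panel of sigma C; whenever sigma X <> E we get
   delta(C, sigma X) = w and delta(X, sigma X) = s_i w.  Thickness provides two
   such X, and sigma is injective, so one of them works.  As lengths are
   bounded, iterating this reaches a chamber mapped to an opposite one. *)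

From mathcomp Require Import all_boot all_order all_algebra.
From Stdlib Require Import Classical_Prop.
From mathcomp Require Import zify.
Set Implicit Arguments. Unset Strict Implicit. Unset Printing Implicit Defensive.
Import Order.TTheory GRing.Theory Num.Theory.
Local Open Scope ring_scope.

(** * Reflections *)

Definition dot (x y : 'cV[rat]_4) : rat := (x^T *m y) 0 0.

Lemma dot_sumr (a : 'cV[rat]_4) (k : nat) (c : 'I_k -> rat) (v : 'I_k -> 'cV[rat]_4) :
  dot a (\sum_(j < k) c j *: v j) = \sum_(j < k) c j * dot a (v j).
Proof.
by rewrite /dot mulmx_sumr summxE; apply: eq_bigr => j _; rewrite -scalemxAr mxE.
Qed.

Lemma dotNr (a x : 'cV[rat]_4) : dot a (- x) = - dot a x.
Proof. by rewrite /dot mulmxN mxE. Qed.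

Lemma dot_orthogonal (g : 'M[rat]_4) (a : 'cV[rat]_4) :
  g^T *m g = 1%:M -> dot (g *m a) (g *m a) = dot a a.
Proof. by move=> gK; rewrite /dot trmx_mul -mulmxA (mulmxA g^T) gK mul1mx. Qed.

Lemma refl_mulmx (a x : 'cV[rat]_4) : refl a *m x = x - (2 * dot a x / dot a a) *: a.
Proof.
rewrite /refl mulmxBl mul1mx -scalemxAl -mulmxA [a^T *m x]mx11_scalar mul_mx_scalar.
by rewrite scalerA mulrAC.
Qed.

Lemma refl_mulmx_self (a : 'cV[rat]_4) : dot a a != 0 -> refl a *m a = - a.
Proof.
move=> a0; rewrite refl_mulmx mulfK // -[2]/(1 + 1) scalerDl scale1r.
by rewrite opprD addrA subrr sub0r.
Qed.

Lemma trmx_refl (a : 'cV[rat]_4) : (refl a)^T = refl a.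
Proof. by rewrite /refl linearB linearZ /= trmx1 trmx_mul trmxK. Qed.

Lemma reflK (a : 'cV[rat]_4) : dot a a != 0 -> refl a *m refl a = 1%:M.
Proof.
move=> a0; rewrite {2}/refl mulmxBr mulmx1 -scalemxAr mulmxA refl_mulmx_self //.
by rewrite mulNmx scalerN opprK /refl subrK.
Qed.

Lemma refl_conj (g : 'M[rat]_4) (a : 'cV[rat]_4) :
  g^T *m g = 1%:M -> refl (g *m a) = g *m refl a *m g^T.
Proof.
move=> gK; rewrite /refl -[_ 0 0]/(dot _ _) dot_orthogonal //.
rewrite mulmxBr mulmx1 mulmxBl (mulmx1C gK) -scalemxAr -scalemxAl.
by rewrite trmx_mul !mulmxA.
Qed.

(** * The root system of F4 *)

Lemma dot_col (l m : seq rat) :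
  dot (\col_(k < 4) l`_k) (\col_(k < 4) m`_k) =
  l`_0 * m`_0 + l`_1 * m`_1 + l`_2 * m`_2 + l`_3 * m`_3.
Proof. by rewrite /dot mxE !big_ord_recl big_ord0 !mxE addr0 !addrA. Qed.

(* The height function: it takes the value 1 on every simple root. *)
Definition height (x : 'cV[rat]_4) : rat := dot (\col_(k < 4) [:: 8; 3; 2; 1]`_k) x.

Definition cartan_rows : seq (seq int) :=
  [:: [:: 2; -1; 0; 0]; [:: -1; 2; -1; 0]; [:: 0; -2; 2; -1]; [:: 0; 0; -1; 2]].

Definition cartan (i j : nat) : int := (nth [::] cartan_rows i)`_j.

Lemma F4root_norm_neq0 i : dot (F4root i) (F4root i) != 0.
Proof. case: i => [[|[|[|[|?]]]] ?] //; by rewrite !dot_col; vm_compute. Qed.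

Lemma F4root_norm_tau i :
  dot (F4root (tauF4 i)) (F4root (tauF4 i)) != dot (F4root i) (F4root i).
Proof. case: i => [[|[|[|[|?]]]] ?] //; by rewrite !dot_col; vm_compute. Qed.

Lemma height_F4root i : height (F4root i) = 1.
Proof.
by case: i => [[|[|[|[|?]]]] ?] //; rewrite /height dot_col; apply/eqP; vm_compute.
Qed.

Lemma cartanE i j :
  2 * dot (F4root i) (F4root j) / dot (F4root i) (F4root i) = (cartan i j)%:~R.
Proof.
case: i j => [[|[|[|[|?]]]] ?] [[|[|[|[|?]]]] ?] //.
all: by rewrite !dot_col; apply/eqP; vm_compute.
Qed.

Definition coroot_pairing (i : nat) (c : seq int) : int :=
  \sum_(0 <= j < 4) c`_j * cartan i j.

Definition coeff_refl (i : nat) (c : seq int) : seq int :=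
  [seq c`_j - (j == i)%:Z * coroot_pairing i c | j <- iota 0 4].

Definition coeff_unit (i : nat) : seq int := [seq (j == i)%:Z | j <- iota 0 4].

Definition posroot_coeffs : seq (seq int) :=
  [:: [:: 0; 0; 0; 1]; [:: 0; 0; 1; 0]; [:: 0; 1; 0; 0]; [:: 1; 0; 0; 0];
      [:: 0; 0; 1; 1]; [:: 0; 1; 1; 0]; [:: 1; 1; 0; 0]; [:: 0; 1; 1; 1];
      [:: 0; 1; 2; 0]; [:: 1; 1; 1; 0]; [:: 0; 1; 2; 1]; [:: 1; 1; 1; 1];
      [:: 1; 1; 2; 0]; [:: 0; 1; 2; 2]; [:: 1; 1; 2; 1]; [:: 1; 2; 2; 0];
      [:: 1; 1; 2; 2]; [:: 1; 2; 2; 1]; [:: 1; 2; 2; 2]; [:: 1; 2; 3; 1];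
      [:: 1; 2; 3; 2]; [:: 1; 2; 4; 2]; [:: 1; 3; 4; 2]; [:: 2; 3; 4; 2]].

Lemma coeff_refl_perm i : (i < 4)%N ->
  coeff_unit i \in posroot_coeffs /\
  perm_eq [seq coeff_refl i c | c <- rem (coeff_unit i) posroot_coeffs]
          (rem (coeff_unit i) posroot_coeffs).
Proof.
by case: i => [|[|[|[|]]]] //; rewrite /coeff_refl /coroot_pairing unlock; vm_compute.
Qed.

Lemma posroot_coeffs_ge0 c : c \in posroot_coeffs ->
  (forall j : 'I_4, 0 <= c`_j) /\ 0 < \sum_(j < 4) c`_j.
Proof.
have : all (fun c => all (fun j => 0 <= c`_j) (iota 0 4) && (0 < \sum_(0 <= j < 4) c`_j))
         posroot_coeffs by rewrite unlock; vm_compute.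
move=> /allP /[apply] /andP [/allP c_ge0]; rewrite big_mkord; split=> // j.
by apply: c_ge0; rewrite mem_iota /= ltn_ord.
Qed.

Definition root_of_coeffs (c : seq int) : 'cV[rat]_4 := \sum_(j < 4) (c`_j)%:~R *: F4root j.

Definition posroots : seq 'cV[rat]_4 := map root_of_coeffs posroot_coeffs.

Lemma sum_F4root_delta (i : 'I_4) (x : int) :
  \sum_(j < 4) ((j == i :> nat)%:Z * x)%:~R *: F4root j = x%:~R *: F4root i.
Proof.
rewrite (bigD1 i) //= eqxx mul1r big1 ?addr0 // => j ji.
by rewrite val_eqE (negbTE ji) mul0r scale0r.
Qed.

Lemma root_of_coeff_unit (i : 'I_4) : root_of_coeffs (coeff_unit i) = F4root i.
Proof.
rewrite -[RHS]scale1r -(sum_F4root_delta i 1); apply: eq_bigr => j _.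
by rewrite (nth_map 0%N) ?size_iota // nth_iota // mulr1.
Qed.

Lemma sF4_F4root (i j : 'I_4) : sF4 i *m F4root j = F4root j - (cartan i j)%:~R *: F4root i.
Proof. by rewrite /sF4 refl_mulmx cartanE. Qed.

Lemma sF4_root_of_coeffs (i : 'I_4) c :
  sF4 i *m root_of_coeffs c = root_of_coeffs (coeff_refl i c).
Proof.
transitivity (root_of_coeffs c - (coroot_pairing i c)%:~R *: F4root i).
  rewrite mulmx_sumr /coroot_pairing big_mkord rmorph_sum scaler_suml -sumrB.
  apply: eq_bigr => j _; rewrite -scalemxAr sF4_F4root scalerBr scalerA.
  by rewrite rmorphM.
rewrite -sum_F4root_delta -sumrB; apply: eq_bigr => j _.
by rewrite -scalerBl -intrB (nth_map 0%N) ?size_iota // nth_iota.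
Qed.

Definition posroots_but (i : 'I_4) : seq 'cV[rat]_4 :=
  map root_of_coeffs (rem (coeff_unit i) posroot_coeffs).

Lemma perm_posroots (i : 'I_4) : perm_eq posroots (F4root i :: posroots_but i).
Proof.
have [unit_in _] := coeff_refl_perm (ltn_ord i).
by rewrite -root_of_coeff_unit -map_cons perm_map // perm_to_rem.
Qed.

Lemma perm_sF4_posroots_but (i : 'I_4) :
  perm_eq (map (mulmx (sF4 i)) (posroots_but i)) (posroots_but i).
Proof.
have [_ perm_refl] := coeff_refl_perm (ltn_ord i).
by rewrite -map_comp (eq_map (sF4_root_of_coeffs i)) map_comp perm_map.
Qed.

Lemma F4root_posroot i : F4root i \in posroots.
Proof. by rewrite (perm_mem (perm_posroots i)) mem_head. Qed.

Lemma sF4_posroot i b : b \in posroots -> b != F4root i -> sF4 i *m b \in posroots.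
Proof.
rewrite !(perm_mem (perm_posroots i)) !inE => /orP [/eqP ->|b_but]; first by rewrite eqxx.
by rewrite -(perm_mem (perm_sF4_posroots_but i)) map_f ?orbT.
Qed.

Lemma height_root_of_coeffs c : height (root_of_coeffs c) = (\sum_(j < 4) c`_j)%:~R.
Proof.
rewrite /height dot_sumr rmorph_sum; apply: eq_bigr => j _.
by rewrite -/(height _) height_F4root mulr1.
Qed.

Lemma height_posroot b : b \in posroots -> 0 < height b.
Proof.
case/mapP => c /posroot_coeffs_ge0 [_ sum_gt0] ->.
by rewrite height_root_of_coeffs ltr0z.
Qed.

Definition is_root (x : 'cV[rat]_4) : bool := (x \in posroots) || (- x \in posroots).

Lemma heightN x : height (- x) = - height x.
Proof. exact: dotNr. Qed.

Lemma is_root_posroot x : is_root x -> (x \in posroots) = (0 < height x).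
Proof.
case/orP=> [x_pos|/height_posroot]; first by rewrite x_pos height_posroot.
rewrite heightN oppr_gt0 => x_lt0; rewrite (lt_gtF x_lt0).
by apply/negbTE; apply: contraTN x_lt0 => /height_posroot /lt_gtF ->.
Qed.

Lemma is_root_height_neq0 x : is_root x -> height x != 0.
Proof.
case/orP=> [/height_posroot|]; first by move/lt0r_neq0.
by move/height_posroot; rewrite heightN oppr_gt0 => /ltr0_neq0.
Qed.

Lemma is_root_sF4 i x : is_root x -> is_root (sF4 i *m x).
Proof.
have posP b : b \in posroots -> is_root (sF4 i *m b).
  move=> b_pos; have [->|bi] := eqVneq b (F4root i).
    by rewrite /is_root refl_mulmx_self ?F4root_norm_neq0 // opprK F4root_posroot orbT.
  by rewrite /is_root sF4_posroot.
case/orP=> [/posP //|/posP]; by rewrite /is_root mulmxN opprK orbC.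
Qed.

(** * Inversions and length in W(F4) *)

Lemma wprod_cat u v : wprod (u ++ v) = wprod u *m wprod v.
Proof. by elim: u => [|i u IH] /=; rewrite ?mul1mx // IH mulmxA. Qed.

Lemma wprod1 i : wprod [:: i] = sF4 i.
Proof. exact: mulmx1. Qed.

Lemma trmx_sF4 i : (sF4 i)^T = sF4 i.
Proof. exact: trmx_refl. Qed.

Lemma sF4K i : sF4 i *m sF4 i = 1%:M.
Proof. exact/reflK/F4root_norm_neq0. Qed.

Lemma trmx_wprod u : (wprod u)^T = wprod (rev u).
Proof.
elim: u => [|i u IH] /=; first by rewrite trmx1.
by rewrite trmx_mul IH trmx_sF4 rev_cons -cats1 wprod_cat wprod1.
Qed.

Lemma inW_sF4 i : inW (sF4 i).
Proof. by exists [:: i]; rewrite wprod1. Qed.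

Lemma inW_mul x y : inW x -> inW y -> inW (x *m y).
Proof. by case=> [u <-] [v <-]; exists (u ++ v); rewrite wprod_cat. Qed.

Lemma inW_tr w : inW w -> inW w^T.
Proof. by case=> [u <-]; exists (rev u); rewrite trmx_wprod. Qed.

Lemma inW_orthogonal w : inW w -> w^T *m w = 1%:M.
Proof.
case=> u <-; elim: u => [|i u IH] /=; first by rewrite trmx1 mulmx1.
by rewrite trmx_mul trmx_sF4 -mulmxA (mulmxA (sF4 i)) sF4K mul1mx.
Qed.

Lemma is_root_W w x : inW w -> is_root x -> is_root (w *m x).
Proof.
case=> u <-; elim: u x => [|i u IH] x /=; first by rewrite mul1mx.
by move=> /IH /(is_root_sF4 i); rewrite mulmxA.
Qed.

(* On W, w^T is the inverse of w. *)
Definition ninv (w : 'M[rat]_4) : nat := count (fun b => height (w^T *m b) < 0) posroots.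

Lemma ninv_sF4 i w : (ninv (sF4 i *m w) + (height (w^T *m F4root i) < 0)%R =
                      ninv w + (0 < height (w^T *m F4root i))%R)%N.
Proof.
set P := fun b => height (w^T *m b) < 0.
have -> : ninv (sF4 i *m w) = count (preim (mulmx (sF4 i)) P) posroots.
  by apply: eq_count => b; rewrite /= trmx_mul trmx_sF4 -mulmxA.
rewrite /ninv !(permP (perm_posroots i)) /= -count_map.
rewrite (permP (perm_sF4_posroots_but i)) /P refl_mulmx_self ?F4root_norm_neq0 //.
by rewrite mulmxN heightN oppr_lt0 addnAC [RHS]addnAC (addnC (0 < _)%R).
Qed.

Lemma ninv_ascent i w : 0 < height (w^T *m F4root i) -> ninv (sF4 i *m w) = (ninv w).+1.
Proof. by move=> h_gt0; have := ninv_sF4 i w; rewrite h_gt0 (lt_gtF h_gt0) addn0 addn1. Qed.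

Lemma ninv_descent i w : height (w^T *m F4root i) < 0 -> (ninv (sF4 i *m w)).+1 = ninv w.
Proof. by move=> h_lt0; have := ninv_sF4 i w; rewrite h_lt0 (lt_gtF h_lt0) addn0 addn1. Qed.

Lemma ninv_sF4_le i w : (ninv (sF4 i *m w) <= (ninv w).+1)%N.
Proof.
apply: leq_trans (leq_addr (height (w^T *m F4root i) < 0)%R _) _.
by rewrite ninv_sF4 -[(ninv w).+1]addn1 leq_add2l leq_b1.
Qed.

Lemma height_W_F4root_neq0 i w : inW w -> height (w^T *m F4root i) != 0.
Proof.
move=> /inW_tr wW; apply/is_root_height_neq0/(is_root_W wW).
by rewrite /is_root F4root_posroot.
Qed.

Lemma ninv_sF4P i w : inW w ->
  ninv (sF4 i *m w) = (ninv w).+1 \/ (ninv (sF4 i *m w)).+1 = ninv w.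
Proof.
move=> /(height_W_F4root_neq0 i).
by case: ltgtP => // [/ninv_descent|/ninv_ascent]; [right|left].
Qed.

Lemma ninv1 : ninv 1%:M = 0%N.
Proof.
rewrite /ninv (eq_in_count (a2 := pred0)) ?count_pred0 // => b /height_posroot.
by rewrite trmx1 mul1mx => /lt_gtF.
Qed.

Lemma ninv_le24 w : (ninv w <= 24)%N.
Proof. exact: count_size. Qed.

Lemma sumr_pmul_lt0 (R : realDomainType) (k : nat) (c x : 'I_k -> R) :
  (forall j, 0 <= c j) -> 0 < \sum_j c j -> (forall j, x j < 0) -> \sum_j c j * x j < 0.
Proof.
move=> c_ge0 sum_gt0 x_lt0.
have [j0 cj0] : exists j, 0 < c j.
  apply/existsP; apply: contraTT sum_gt0; rewrite negb_exists => /forallP c_le0.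
  by rewrite -leNgt; apply: sumr_le0 => j _; rewrite leNgt c_le0.
rewrite (bigD1 j0) //= -oppr_gt0 opprD ltr_pwDl ?oppr_gt0 ?pmulr_rlt0 //.
by rewrite -sumrN; apply: sumr_ge0 => j _; rewrite oppr_ge0 nmulr_lle0.
Qed.

Lemma ninv_all_descents w : (forall i, height (w^T *m F4root i) < 0) -> ninv w = 24%N.
Proof.
move=> desc; rewrite /ninv (eq_in_count (a2 := predT)) ?count_predT // => b.
case/mapP => c /posroot_coeffs_ge0 [c_ge0 sum_gt0] -> /=.
rewrite /root_of_coeffs mulmx_sumr /height.
under eq_bigr do rewrite -scalemxAr.
rewrite dot_sumr sumr_pmul_lt0 // => [j|]; first by rewrite ler0z.
by rewrite -rmorph_sum ltr0z.
Qed.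

Lemma exchange_posroot b u : b \in posroots -> height ((wprod u)^T *m b) < 0 ->
  exists2 v, (size v).+1 = size u & wprod v = refl b *m wprod u.
Proof.
elim: u b => [|j u IH] b b_pos /=.
  by rewrite trmx1 mul1mx => /lt_gtF; rewrite height_posroot.
rewrite trmx_mul trmx_sF4 -mulmxA.
have [->|bj] := eqVneq b (F4root j).
  by exists u; rewrite // -[refl _]/(sF4 j) mulmxA sF4K mul1mx.
move=> /(IH _ (sF4_posroot b_pos bj)) [v size_v wv].
exists (j :: v); first by rewrite /= size_v.
rewrite [wprod _]/= wv refl_conj; last by rewrite trmx_sF4 sF4K.
by rewrite trmx_sF4 !mulmxA sF4K mul1mx.
Qed.

Lemma ninv_wprod_le u : (ninv (wprod u) <= size u)%N.
Proof.
elim: u => [|i u IH] /=; first by rewrite ninv1.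
exact: leq_trans (ninv_sF4_le i _) _.
Qed.

Lemma reduced_word w : inW w -> exists2 v, wprod v = w & size v = ninv w.
Proof.
case=> u <-; elim: u => [|i u [v vu size_v]]; first by exists [::]; rewrite ?ninv1.
have uW : inW (wprod u) by exists u.
case: (ltgtP (height ((wprod u)^T *m F4root i)) 0) => [h_lt0|h_gt0|/eqP].
- have [|v' size_v' wv'] := exchange_posroot (F4root_posroot i) (u := v).
    by rewrite vu.
  exists v'; first by rewrite wv' vu.
  by apply: succn_inj; rewrite size_v' size_v /= (ninv_descent h_lt0).
- by exists (i :: v); rewrite /= ?vu // (ninv_ascent h_gt0) size_v.
- by rewrite (negbTE (height_W_F4root_neq0 i uW)).
Qed.

Lemma wlen_ninv w : inW w -> wlen w (ninv w).
Proof.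
move=> wW; split; first by have [v] := reduced_word wW; exists v.
by move=> u <-; apply: ninv_wprod_le.
Qed.

Lemma wlen_ninvE w n : inW w -> wlen w n -> n = ninv w.
Proof.
move=> /wlen_ninv [[u [size_u wu]] ninv_min] [[v [size_v wv]] n_min].
by apply/eqP; rewrite eqn_leq -{1}size_u n_min //= -size_v ninv_min.
Qed.

Lemma ninv_eq0 w : inW w -> ninv w = 0%N -> w = 1%:M.
Proof. by move=> /reduced_word [[|i v] <- size_v] // ninv0; rewrite ninv0 in size_v. Qed.

Lemma ninv_tr w : inW w -> ninv w^T = ninv w.
Proof.
suff ninv_tr_le x : inW x -> (ninv x^T <= ninv x)%N.
  move=> wW; apply/eqP; rewrite eqn_leq ninv_tr_le //=.
  by have := ninv_tr_le _ (inW_tr wW); rewrite trmxK.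
by move=> /reduced_word [v <- <-]; rewrite trmx_wprod -size_rev ninv_wprod_le.
Qed.

Lemma ninv_mul_le x y : inW x -> inW y -> (ninv (x *m y) <= ninv x + ninv y)%N.
Proof.
move=> /reduced_word [u <- <-] /reduced_word [v <- <-].
by rewrite -wprod_cat -size_cat ninv_wprod_le.
Qed.

Lemma exists_descent w : inW w -> (0 < ninv w)%N ->
  exists i, (ninv (sF4 i *m w)).+1 = ninv w.
Proof.
move=> /reduced_word [[|i v] <- size_v]; first by rewrite -size_v.
move=> _; exists i; rewrite -size_v mulmxA sF4K mul1mx; congr _.+1.
apply/eqP; rewrite eqn_leq ninv_wprod_le /=.
by have := ninv_sF4_le i (wprod v); rewrite -[sF4 i *m _]/(wprod (i :: v)) -size_v.
Qed.

Lemma ninv_mulr_sF4 i w : inW w -> ninv (w *m sF4 i) = ninv (sF4 i *m w^T).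
Proof.
move=> wW; rewrite -[LHS]ninv_tr; last exact/inW_mul/inW_sF4.
by rewrite trmx_mul trmx_sF4.
Qed.

Lemma ninv_mulr_sF4P i w : inW w ->
  ninv (w *m sF4 i) = (ninv w).+1 \/ (ninv (w *m sF4 i)).+1 = ninv w.
Proof. by move=> wW; rewrite ninv_mulr_sF4 // -(ninv_tr wW); apply/ninv_sF4P/inW_tr. Qed.

Lemma ninv_sF4_twist i w : inW w -> ninv (sF4 i *m w) = (ninv w).+1 ->
  ninv (w *m sF4 (tauF4 i)) = (ninv w).+1 ->
  ninv (sF4 i *m w *m sF4 (tauF4 i)) = (ninv w).+2.
Proof.
move=> wW asc_l asc_r; set b := w^T *m F4root i.
have b_gt0 : 0 < height b.
  case: ltgtP (height_W_F4root_neq0 i wW) => // /ninv_descent.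
  by rewrite asc_l => /eqP; rewrite -addn2 -{2}[ninv w]addn0 eqn_add2l.
have b_root : is_root b.
  by apply: is_root_W; [exact: inW_tr | rewrite /is_root F4root_posroot].
have b_pos : b \in posroots by rewrite is_root_posroot.
have b_neq : b != F4root (tauF4 i).
  apply: contraNneq (F4root_norm_tau i) => <-.
  by rewrite dot_orthogonal // trmxK; apply/mulmx1C/inW_orthogonal.
rewrite -mulmxA ninv_ascent ?asc_r // trmx_mul trmx_sF4 -mulmxA.
by rewrite height_posroot // sF4_posroot.
Qed.

Lemma ninv_sF4_1 i : ninv (sF4 i) = 1%N.
Proof.
have := @ninv_ascent i 1%:M.
by rewrite trmx1 mul1mx mulmx1 ninv1 height_F4root ltr01; apply.
Qed.

Lemma sF4_neq1 i : sF4 i != 1%:M.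
Proof. by apply/eqP => /(congr1 ninv); rewrite ninv_sF4_1 ninv1. Qed.

Lemma trmx_sF4_mulK i (x y : 'M[rat]_4) : (sF4 i *m x)^T *m (sF4 i *m y) = x^T *m y.
Proof. by rewrite trmx_mul trmx_sF4 -mulmxA (mulmxA (sF4 i)) sF4K mul1mx. Qed.

(** * Buildings of type F4 and their dualities *)

Lemma bounded_ascent (T : Type) (f : T -> nat) (N : nat) (P : T -> Prop) :
  (forall x, (f x <= N)%N) -> (forall x, P x \/ exists y, (f x < f y)%N) ->
  T -> exists y, P y.
Proof.
move=> f_le step x; move: {2}(N - f x)%N (leqnn (N - f x)) => k.
elim: k x => [|k IH] x gap; case: (step x) => [Px|[y fxy]]; try by exists x.
  by have := f_le y; lia.
by apply: (IH y); lia.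
Qed.

Section Building.

Variables (Ch : Type) (delta : Ch -> Ch -> 'M[rat]_4).
Hypothesis building : is_F4_building delta.

Lemma inW_delta C D : inW (delta C D).
Proof. by case: building. Qed.

Lemma delta_eq1 C D : delta C D = 1%:M -> C = D.
Proof. by case: building => _ dist1 _ _ /dist1. Qed.

Lemma delta_refl C : delta C C = 1%:M.
Proof. by case: building => _ dist1 _ _; apply/dist1. Qed.

Lemma delta_ascent C C' D i : delta C' C = sF4 i ->
  ninv (sF4 i *m delta C D) = (ninv (delta C D)).+1 -> delta C' D = sF4 i *m delta C D.
Proof.
case: building => _ _ WD2 _ adj asc; apply: (WD2 C D C' i adj).2.
move=> n /(wlen_ninvE (inW_delta C D)) ->; rewrite -asc.
exact/wlen_ninv/inW_mul/inW_delta/inW_sF4.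
Qed.

Lemma delta_adj_sym C X i : delta X C = sF4 i -> delta C X = sF4 i.
Proof.
move=> adj; case: building => _ _ WD2 _.
case: (WD2 C X X i adj).1; rewrite delta_refl.
  by move/(congr1 (mulmx (sF4 i))); rewrite mulmx1 mulmxA sF4K mul1mx.
move=> /esym/delta_eq1 CX.
by move: adj (sF4_neq1 i); rewrite CX delta_refl => <-; rewrite eqxx.
Qed.

Lemma delta_gallery C D E :
  ninv ((delta C D)^T *m delta C E) = (ninv (delta C D) + ninv (delta C E))%N ->
  delta D E = (delta C D)^T *m delta C E.
Proof.
move: {2}(ninv (delta C D)) (erefl (ninv (delta C D))) => k.
elim: k C => [|k IH] C len_CD len_add.
  by rewrite -(delta_eq1 (ninv_eq0 (inW_delta C D) len_CD)) delta_refl trmx1 mul1mx.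
have [i desc] : exists i, (ninv (sF4 i *m delta C D)).+1 = ninv (delta C D).
  by apply: exists_descent (inW_delta C D) _; rewrite len_CD.
have [C1 [adj dist_C1D]] : exists C1, delta C1 C = sF4 i /\ delta C1 D = sF4 i *m delta C D.
  by case: building => _ _ _; apply.
have asc : ninv (sF4 i *m delta C E) = (ninv (delta C E)).+1.
  case: (ninv_sF4P i (inW_delta C E)) => // desc_E.
  have := ninv_mul_le (inW_tr (inW_mul (inW_sF4 i) (inW_delta C D)))
                      (inW_mul (inW_sF4 i) (inW_delta C E)).
  rewrite trmx_sF4_mulK ninv_tr ?len_add; first lia.
  exact: inW_mul (inW_sF4 i) (inW_delta C D).
rewrite -(trmx_sF4_mulK i) -dist_C1D -(delta_ascent adj asc); apply: IH.
  by rewrite dist_C1D; lia.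
rewrite dist_C1D (delta_ascent adj asc) trmx_sF4_mulK len_add asc; lia.
Qed.

Lemma delta_tr C D : delta D C = (delta C D)^T.
Proof.
rewrite -[RHS]mulmx1 -(delta_refl C); apply: delta_gallery.
by rewrite delta_refl mulmx1 (ninv_tr (inW_delta C D)) ninv1 addn0.
Qed.

Lemma delta_ascentr X Y Y' j : delta Y' Y = sF4 j ->
  ninv (delta X Y *m sF4 j) = (ninv (delta X Y)).+1 -> delta X Y' = delta X Y *m sF4 j.
Proof.
move=> adj asc; rewrite delta_tr (delta_ascent (D := X) adj).
  by rewrite delta_tr trmx_mul trmx_sF4 trmxK.
by rewrite delta_tr -(ninv_mulr_sF4 j (inW_delta X Y)) asc (ninv_tr (inW_delta X Y)).
Qed.

Lemma delta_adjr_exists X Y j :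
  exists Y', delta Y' Y = sF4 j /\ delta X Y' = delta X Y *m sF4 j.
Proof.
case: building => _ _ _ /(_ Y X j) [Y' [adj dist]]; exists Y'; split=> //.
by rewrite delta_tr dist delta_tr trmx_mul trmx_sF4 trmxK.
Qed.

Lemma delta_panel A B Y j : delta A Y = sF4 j -> delta B Y = sF4 j -> A <> B ->
  delta A B = sF4 j.
Proof.
move=> adjA /delta_adj_sym adjB AB; case: building => _ _ WD2 _.
by case: (WD2 Y B A j adjA).1; rewrite adjB // sF4K => /delta_eq1.
Qed.

(* E is the projection of C on the j-panel of D. *)
Lemma delta_panel_nonproj C D D' E j : delta D' D = sF4 j -> delta E D = sF4 j -> D' <> E ->
  delta C E = delta C D *m sF4 j -> (ninv (delta C E)).+1 = ninv (delta C D) ->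
  delta C D' = delta C D.
Proof.
move=> adj' adjE D'E CE desc.
rewrite (delta_ascentr (delta_panel adj' adjE D'E)) CE -mulmxA sF4K mulmx1 //.
by rewrite -CE.
Qed.

Section Duality.

Variable sigma : Ch -> Ch.
Hypotheses (thick_delta : thick delta) (duality : is_duality delta sigma).

Lemma duality_adj X C i : delta X C = sF4 i -> delta (sigma X) (sigma C) = sF4 (tauF4 i).
Proof. by case: duality => _ dual; rewrite -!wprod1 => /dual. Qed.

Lemma opposite_ninv24 C D : ninv (delta C D) = 24%N -> opposite delta C D.
Proof.
move=> len; exists 24%N; split; first by rewrite -len; apply/wlen_ninv/inW_delta.
by move=> u n /(wlen_ninvE (ex_intro _ u erefl)) ->; apply: ninv_le24.
Qed.

Lemma duality_progress C : opposite delta C (sigma C) \/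
  exists C', (ninv (delta C (sigma C)) < ninv (delta C' (sigma C')))%N.
Proof.
set w := delta C (sigma C); have wW : inW w := inW_delta _ _.
have [all_desc|] := boolP [forall i, height (w^T *m F4root i) < 0].
  by left; apply/opposite_ninv24/ninv_all_descents; apply/forallP.
rewrite negb_forall => /existsP [i not_desc]; right.
have asc : ninv (sF4 i *m w) = (ninv w).+1.
  by apply: ninv_ascent; move: (height_W_F4root_neq0 i wW) not_desc; case: ltgtP.
have [C1 [C2 [C12 [adj1 adj2]]]] := thick_delta C i.
have near X : delta C X = sF4 i ->
    delta X (sigma C) = sF4 i *m w /\ delta (sigma X) (sigma C) = sF4 (tauF4 i).
  by move=> /delta_adj_sym adj; rewrite (delta_ascent adj asc) (duality_adj adj).
case: (ninv_mulr_sF4P (tauF4 i) wW) => [asc_r|desc_r].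
  have [dist1 sdist1] := near C1 adj1; exists C1.
  by rewrite (delta_ascentr sdist1) dist1 ?ninv_sF4_twist ?asc.
have [E [adjE dist_CE]] := delta_adjr_exists C (sigma C) (tauF4 i).
have off X : delta C X = sF4 i -> sigma X <> E -> delta X (sigma X) = sF4 i *m w.
  move=> adjX XE; have [_ sdistX] := near X adjX.
  have dist_CX : delta C (sigma X) = w.
    by apply: (delta_panel_nonproj sdistX adjE XE dist_CE); rewrite dist_CE.
  rewrite -dist_CX; apply: (delta_ascent (delta_adj_sym adjX)).
  by rewrite dist_CX.
case: (classic (sigma C1 = E)) => [E1|E1]; last by exists C1; rewrite off // asc.
exists C2; rewrite off ?asc // => E2; apply: C12.
by case: duality => [[? sigmaK _] _]; rewrite -(sigmaK C1) -(sigmaK C2) E1 E2.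
Qed.

End Duality.

End Building.

Theorem lemma4p1 (Ch : Type) (c0 : Ch) (delta : Ch -> Ch -> 'M[rat]_4)
  (sigma : Ch -> Ch) :
  is_F4_building delta -> thick delta -> is_duality delta sigma ->
  ~ domestic delta sigma.
Proof.
move=> building thick_delta duality domestic_sigma.
have [C opp] := bounded_ascent (fun C => ninv_le24 (delta C (sigma C)))
  (duality_progress building thick_delta duality) c0.
exact: domestic_sigma opp.
Qed.
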